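(* Let $H$ be a finite group of odd order with $d(H)=2$, let $G=\mathbb{Z}_2^2\times H$, and let $P$ be a position of $\mathsf{GEN}(G)$ with $P\subseteq \{e\}\times H$ and $|P|$ even. Then $\operatorname{nim}(P)=1$.
   Context: For a finite group $G$, $\mathsf{GEN}(G)$ is the following impartial two-player game. A position is a set of elements selected so far; the starting position is $\emptyset$. From a position $P$ with $\langle P\rangle\neq G$, the player to move selects some $g\in G\setminus P$, producing the position $P\cup\{g\}$ (these are the options of $P$); a position $P$ with $\langle P\rangle = G$ has no options. The nim-number of a position is defined recursively by $\operatorname{nim}(P)=\operatorname{mex}\{\operatorname{nim}(Q): Q \text{ an option of } P\}$, where $\operatorname{mex}(A)$ is the least nonnegative integer not in $A$. $d(G)$ denotes the minimum size of a generating set of $G$; $e$ denotes the identity. *)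

From HB Require Import structures.
From mathcomp Require Import all_boot all_order all_algebra all_fingroup.
Set Implicit Arguments. Unset Strict Implicit. Unset Printing Implicit Defensive.

Local Open Scope group_scope.

(* mex of a finite list of naturals: least k not in s (some k <= size s works) *)
Definition mex (s : seq nat) : nat :=
  find (fun k => k \notin s) (iota 0 (size s).+1).

Section Gen.
Variable gT : finGroupType.
Variable G : {set gT}.

Definition gen_rank : nat :=
  find (fun k => [exists A : {set gT}, [&& A \subset G, #|A| == k & <<A>> == G]])
       (iota 0 #|G|.+1).

Fixpoint nim_fuel (n : nat) (P : {set gT}) : nat :=
  match n with
  | 0 => 0
  | n'.+1 =>
      if <<P>> == G then 0
      else mex [seq nim_fuel n' (g |: P) | g <- enum (G :\: P)]
  end.

(* Fuel #|G|.+1 suffices for every P \subset G: each move adds a new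
   element of G, so the game tree has depth at most #|G :\: P|. *)
Definition nim (P : {set gT}) : nat := nim_fuel #|G|.+1 P.
End Gen.

From HB Require Import structures.
From mathcomp Require Import all_boot all_order all_algebra all_fingroup.
From mathcomp Require Import cyclic.
Set Implicit Arguments. Unset Strict Implicit. Unset Printing Implicit Defensive.

(* Since |Z_2^2| and |H| are coprime, a subset T of G = Z_2^2 x H generates G iff
   its two projections generate Z_2^2 and H.  The nim-number of a non-final position T is
   an explicit function [nim_value] of three data: whether the first projection of T
   is trivial, the parity of |T|, and whether the second projection S of T is
   [nearly_gen], i.e. generates H after adding one element.  If the first projection
   is nontrivial, the value is 2 for |T| odd and [nearly_gen S] for |T| even; on
   {e} x H it is 1 for |T| even, and for |T| odd it is 0 or 2 according as every
   h |: S is [nearly_gen] or not.  Checking the mex recursion for this function only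
   needs a few explicit moves: any set containing one element a of a 2-element
   generating set of H is [nearly_gen], and a move that does not change the generated
   subgroup exists by parity, as every nontrivial subgroup of Z_2^2 has even order. *)

Local Open Scope group_scope.

Lemma mexE (s : seq nat) (v : nat) :
  (forall k, k < v -> k \in s)%N -> v \notin s -> mex s = v.
Proof.
move=> lt_v_s v_s; have le_v_s : (v <= size s)%N.
  rewrite -(size_iota 0 v); apply: uniq_leq_size (iota_uniq 0 v) _ => k.
  by rewrite mem_iota add0n; exact: lt_v_s.
have nth_iota_s k : (k <= size s)%N -> nth 0%N (iota 0 (size s).+1) k = k.
  by move=> le_k; rewrite nth_iota.
have has_v : has (fun k => k \notin s) (iota 0 (size s).+1).
  by apply/hasP; exists v; [rewrite mem_iota add0n ltnS | exact: v_s].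
rewrite /mex; apply/eqP; rewrite eqn_leq; apply/andP.
split; rewrite leqNgt; apply/negP => lt.
- have := before_find 0%N lt; rewrite nth_iota_s // => /negbFE.
  by rewrite (negbTE v_s).
- have := nth_find 0%N has_v; rewrite nth_iota_s; last exact: leq_trans (ltnW lt) le_v_s.
  by rewrite lt_v_s.
Qed.

Lemma mex_imageE (T : finType) (A : {set T}) (F : T -> nat) (v : nat) :
  (forall x, x \in A -> F x != v) ->
  (forall k, (k < v)%N -> exists2 x, x \in A & F x = k) ->
  mex [seq F x | x <- enum A] = v.
Proof.
move=> Fv Fk; apply: mexE => [k /Fk [x Ax <-]|].
  by apply: map_f; rewrite mem_enum.
by apply/negP => /mapP [x]; rewrite mem_enum => /Fv /eqP neq /esym.
Qed.

Section NimRecursion.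

Variables (gT : finGroupType) (G : {set gT}) (f : {set gT} -> nat).
Hypothesis f_rec : forall P : {set gT}, P \subset G ->
  f P = if <<P>> == G then 0%N else mex [seq f (g |: P) | g <- enum (G :\: P)].

Lemma nim_fuel_eq n (P : {set gT}) :
  P \subset G -> (#|G :\: P| < n)%N -> nim_fuel G n P = f P.
Proof.
elim: n P => // n IH P sPG ltPn /=; rewrite f_rec //; case: ifP => // _.
congr mex; apply/eq_in_map => g; rewrite mem_enum => /setDP [Gg Pg].
apply: IH; first by rewrite subUset sub1set Gg.
rewrite -ltnS; apply: leq_trans ltPn; rewrite ltnS proper_card //; apply/properP.
split; first by apply: setDS; apply: subsetUr.
by exists g; rewrite !inE ?eqxx // Pg.
Qed.

Lemma nim_eq (P : {set gT}) : P \subset G -> nim G P = f P.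
Proof.
by move=> sPG; apply: nim_fuel_eq; rewrite // ltnS subset_leq_card ?subsetDl.
Qed.

End NimRecursion.

Lemma gen_setU1_id (gT : finGroupType) (A : {set gT}) (x : gT) :
  x \in <<A>> -> <<x |: A>> = <<A>>.
Proof.
move=> Ax; apply/eqP; rewrite eqEsubset (genS (subsetUr [set x] A)) andbT.
by rewrite gen_subG subUset sub1set Ax subset_gen.
Qed.

Lemma gen_rank_spec (gT : finGroupType) (H : {group gT}) :
  exists A : {set gT}, [/\ A \subset H, #|A| = gen_rank H & <<A>> = H].
Proof.
rewrite /gen_rank; set p := (X in find X _).
have has_p : has p (iota 0 #|H|.+1).
  apply/hasP; exists #|H|; first by rewrite mem_iota add0n ltnSn.
  by apply/existsP; exists (H : {set gT}); rewrite subxx genGid !eqxx.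
have := nth_find 0%N has_p; rewrite nth_iota ?add0n; last first.
  by move: has_p; rewrite has_find size_iota.
by case/existsP => A /and3P [sAH /eqP cardA /eqP genA]; exists A.
Qed.

Section CoprimeDirectProduct.

Variables (kT hT : finGroupType) (K : {group kT}) (H : {group hT}).
Hypothesis coKH : coprime #|K| #|H|.

Lemma expg_chinese (x : kT * hT) (r1 r2 : nat) : x \in setX K H ->
  x ^+ chinese #|K| #|H| r1 r2 = (x.1 ^+ r1, x.2 ^+ r2).
Proof.
case: x => y z /setXP [Ky Hz].
have expg_pair n : (y, z) ^+ n = (y ^+ n, z ^+ n).
  by elim: n => // n IH; rewrite !expgS IH.
have [yK1 zH1] := (expg_cardG Ky, expg_cardG Hz).
by rewrite expg_pair -(expg_mod _ yK1) chinese_modl // (expg_mod _ yK1)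
  -(expg_mod _ zH1) chinese_modr // (expg_mod _ zH1).
Qed.

Lemma gen_setX_coprime (T : {set kT * hT}) : T \subset setX K H ->
  <<T>> = setX <<fst @: T>> <<snd @: T>>.
Proof.
move=> sTKH; apply/eqP; rewrite eqEsubset; apply/andP; split.
  rewrite gen_subG; apply/subsetP => -[y z] Tyz.
  by rewrite in_setX !mem_gen // ?(imset_f fst Tyz) ?(imset_f snd Tyz).
have in_gen x r1 r2 : x \in T -> (x.1 ^+ r1, x.2 ^+ r2) \in <<T>>.
  by move=> Tx; rewrite -expg_chinese ?(subsetP sTKH) // groupX ?mem_gen.
rewrite -setX_prod mul_subG // -?morphim_pairg1 -?morphim_pair1g morphim_gen ?subsetT //
  gen_subG; apply/subsetP => _ /morphimP [_ _ /imsetP [x Tx ->] ->].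
- by have := in_gen x 1%N 0%N Tx; rewrite expg1 expg0.
- by have := in_gen x 0%N 1%N Tx; rewrite expg1 expg0.
Qed.

Lemma gen_setX_coprime_eq (T : {set kT * hT}) : T \subset setX K H ->
  (<<T>> == setX K H) = (<<fst @: T>> == K) && (<<snd @: T>> == H).
Proof.
move=> sTKH; rewrite gen_setX_coprime //; apply/eqP/andP => [eqX | [/eqP-> /eqP->] //].
split; apply/eqP/setP => u.
- have := congr1 (fun X : {set kT * hT} => (u, 1) \in X) eqX.
  by rewrite /= !in_setX !group1 !andbT.
- have := congr1 (fun X : {set kT * hT} => (1, u) \in X) eqX.
  by rewrite /= !in_setX !group1.
Qed.

End CoprimeDirectProduct.

Section KleinFourGroup.

Local Notation V := [set: 'Z_2 * 'Z_2].

Lemma card_klein : #|V| = 4%N.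
Proof. by rewrite cardsT card_prod card_ord. Qed.

Lemma klein_sq (z : 'Z_2 * 'Z_2) : z ^+ 2 = 1.
Proof. by case: z => [[[|[|?]] ?] [[|[|?]] ?]]; apply/eqP. Qed.

Lemma card_klein_subgroup (L : {group 'Z_2 * 'Z_2}) : #|L| \in [:: 1; 2; 4]%N.
Proof.
have dvdL : (#|L| %| 4)%N by rewrite -card_klein cardSg ?subsetT.
by move: dvdL (dvdn_leq (isT : (0 < 4)%N) dvdL); case: #|L| => [|[|[|[|[|n]]]]].
Qed.

Lemma klein_cycle_proper (z : 'Z_2 * 'Z_2) : <[z]> \proper V.
Proof.
rewrite properEcard subsetT card_klein -orderE.
have: (#[z] %| 2)%N by rewrite order_dvdn klein_sq.
by move=> /dvdn_leq-/(_ isT) /leq_ltn_trans; apply.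
Qed.

Lemma klein_gen_even (A : {set 'Z_2 * 'Z_2}) :
  ~~ (A \subset [set 1]) -> ~~ odd #|<<A>>|.
Proof.
move=> ntA; have: <<A>> != 1.
  by apply: contra ntA => /eqP trA; apply: subset_trans (subset_gen A) _; rewrite trA.
rewrite trivg_card1; have := card_klein_subgroup <<A>>.
by rewrite !inE => /or3P [] /eqP ->.
Qed.

Lemma klein_genU1 (A : {set 'Z_2 * 'Z_2}) (z : 'Z_2 * 'Z_2) :
  ~~ (A \subset [set 1]) -> z \notin <<A>> -> <<z |: A>> = V.
Proof.
move=> ntA zA; apply/eqP; rewrite eqEcard subsetT card_klein.
have ltAzA : (#|<<A>>| < #|<<z |: A>>|)%N.
  apply: proper_card; rewrite properE genS ?subsetUr //=.
  by apply: contra zA => /subsetP; apply; rewrite mem_gen ?setU11.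
have gt1A : (1 < #|<<A>>|)%N.
  by have := klein_gen_even ntA; case: #|<<A>>| (cardG_gt0 <<A>>) => [|[|]].
have := leq_ltn_trans gt1A ltAzA; have := card_klein_subgroup <<z |: A>>.
by rewrite !inE => /or3P [] /eqP ->.
Qed.

End KleinFourGroup.

Section GenGame.

Variables (hT : finGroupType) (H : {group hT}).
Hypothesis oddH : odd #|H|.
Variables a b : hT.
Hypothesis genH_ab : <<[set a; b]>> = H.

Local Notation V := [set: 'Z_2 * 'Z_2].
Local Notation G := (setX V H).
Implicit Types (T : {set 'Z_2 * 'Z_2 * hT}) (S : {set hT}).

Definition nearly_gen S := [exists h, <<h |: S>> == H].

Lemma a_in_H : a \in H.
Proof. by rewrite -genH_ab mem_gen // !inE eqxx. Qed.

Lemma nearly_gen_a S : S \subset H -> a \in S -> nearly_gen S.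
Proof.
move=> sSH aS; have Hb : b \in H by rewrite -genH_ab mem_gen // !inE eqxx orbT.
apply/existsP; exists b; rewrite eqEsubset gen_subG subUset sub1set Hb sSH /=.
rewrite -{1}genH_ab genS //; apply/subsetP => x.
by rewrite !inE => /orP [] /eqP ->; rewrite ?eqxx ?aS ?orbT.
Qed.

Lemma coprime_klein : coprime #|V| #|H|.
Proof. by rewrite card_klein -[4%N]/(2 ^ 2)%N coprime_pexpl // coprime2n. Qed.

Lemma gen_game T : T \subset G -> <<T>> = setX <<fst @: T>> <<snd @: T>>.
Proof. exact: gen_setX_coprime coprime_klein T. Qed.

Lemma gen_game_eq T : T \subset G ->
  (<<T>> == G) = (<<fst @: T>> == V) && (<<snd @: T>> == H).
Proof. exact: gen_setX_coprime_eq coprime_klein T. Qed.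

Lemma snd_game_sub T : T \subset G -> snd @: T \subset H.
Proof.
by move=> sTG; apply/subsetP => _ /imsetP [[z h] /(subsetP sTG) /setXP [_ Hh] ->].
Qed.

Lemma mem_moves T z h : h \in H -> (z \notin fst @: T) || (h \notin snd @: T) ->
  (z, h) \in G :\: T.
Proof.
move=> Hh fresh; rewrite !inE Hh !andbT; apply: contraL fresh => Tzh.
by rewrite negb_or !negbK (imset_f fst Tzh) (imset_f snd Tzh).
Qed.

Lemma not_gen_fst_cycle T (z : 'Z_2 * 'Z_2) : T \subset G ->
  fst @: T \subset <[z]> -> ~~ (<<T>> == G).
Proof.
move=> sTG sTz; rewrite gen_game_eq // negb_and; apply/orP; left.
have genT_z : <<fst @: T>> \subset <[z]> by rewrite gen_subG.
by apply: contraL (klein_cycle_proper z) => /eqP <-; rewrite properE genT_z andbF.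
Qed.

Lemma nearly_gen_of_move T g : T \subset G -> g \in G -> <<g |: T>> == G ->
  nearly_gen (snd @: T).
Proof.
move=> sTG Gg; rewrite gen_game_eq ?subUset ?sub1set ?Gg // => /andP [_].
by rewrite imsetU1 => genH; apply/existsP; exists g.2.
Qed.

Definition nim_value T : nat :=
  if <<T>> == G then 0%N
  else if fst @: T \subset [set 1] then
    if odd #|T| then (if [forall h in H, nearly_gen (h |: snd @: T)] then 0 else 2)%N
    else 1%N
  else if odd #|T| then 2%N else nearly_gen (snd @: T).

Lemma nim_value_move_top T g : ~~ (fst @: T \subset [set 1]) -> g \notin T ->
  nim_value (g |: T) =
  if <<g |: T>> == G then 0%N
  else if odd #|T| then nearly_gen (g.2 |: snd @: T) : nat else 2%N.
Proof.
move=> nt1 Tg; rewrite /nim_value !imsetU1 subUset (negbTE nt1) andbF.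
by rewrite cardsU1 Tg add1n /=; case: odd.
Qed.

Lemma nim_value_move_bottom T g : T \subset G -> fst @: T \subset [set 1] ->
  g \in G :\: T ->
  nim_value (g |: T) =
  if g.1 == 1 then
    if odd #|T| then 1%N
    else if [forall h in H, nearly_gen (h |: (g.2 |: snd @: T))] then 0%N else 2%N
  else if odd #|T| then nearly_gen (g.2 |: snd @: T) : nat else 2%N.
Proof.
move=> sTG sT1 /setDP [Gg Tg].
have ntgT : ~~ (<<g |: T>> == G).
  apply: (@not_gen_fst_cycle _ g.1); first by rewrite subUset sub1set Gg.
  by rewrite imsetU1 subUset sub1set cycle_id (subset_trans sT1) ?sub1G.
rewrite /nim_value (negbTE ntgT) !imsetU1 subUset sT1 andbT sub1set inE.
by rewrite cardsU1 Tg add1n /=; case: (_ == 1); case: odd.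
Qed.

Lemma exists_final_move T : T \subset G -> ~~ (<<T>> == G) ->
  ~~ (fst @: T \subset [set 1]) -> nearly_gen (snd @: T) ->
  exists2 g, g \in G :\: T & <<g |: T>> == G.
Proof.
move=> sTG ntT nt1 /existsP [h genH].
have Hh : h \in H by rewrite -(eqP genH) mem_gen ?setU11.
have final z : <<z |: fst @: T>> = V -> <<(z, h) |: T>> == G.
  by move=> genV; rewrite gen_game_eq ?subUset ?sub1set ?inE ?Hh // !imsetU1 genV eqxx.
have [genV | ngenV] := boolP (<<fst @: T>> == V).
  exists (1, h); last by rewrite final // (gen_setU1_id (group1 _)) (eqP genV).
  apply: mem_moves => //; apply/orP; right; apply: contra ntT => Sh.
  rewrite gen_game_eq // genV /=.
  by have -> : snd @: T = h |: snd @: T by apply/esym/setUidPr; rewrite sub1set.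
have : <<fst @: T>> \proper V by rewrite properEneq ngenV subsetT.
case/properP => _ [z _ zT]; exists (z, h); last by rewrite final // klein_genU1.
by apply: mem_moves => //; apply/orP; left; apply: contra zT; apply: mem_gen.
Qed.

Lemma exists_quiet_move T : T \subset G -> ~~ (fst @: T \subset [set 1]) ->
  odd #|T| ->
  exists2 g, g \in G :\: T & (g.2 \in snd @: T) && (<<g |: T>> == <<T>>).
Proof.
move=> sTG nt1 oT; set X := setX <<fst @: T>> (snd @: T).
have sTX : T \subset X.
  apply/subsetP => -[z h] Tzh.
  by rewrite /X in_setX mem_gen ?(imset_f fst Tzh) ?(imset_f snd Tzh).
have : T \proper X.
  rewrite properEneq sTX andbT; apply: contraTneq oT => ->.
  by rewrite /X cardsX oddM negb_and klein_gen_even.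
case/properP => _ [[z h] /setXP [gen_z Sh] Tzh]; exists (z, h).
  by rewrite !inE Tzh (subsetP (snd_game_sub sTG)).
have genTzh : (z, h) \in <<T>> by rewrite gen_game // in_setX gen_z mem_gen.
by rewrite Sh gen_setU1_id ?eqxx.
Qed.

Lemma nim_value_rec_top T : T \subset G -> ~~ (<<T>> == G) ->
  ~~ (fst @: T \subset [set 1]) ->
  nim_value T = mex [seq nim_value (g |: T) | g <- enum (G :\: T)].
Proof.
move=> sTG ntT nt1; set S := snd @: T.
have moveE g : g \in G :\: T -> nim_value (g |: T) =
    if <<g |: T>> == G then 0%N
    else if odd #|T| then nearly_gen (g.2 |: S) : nat else 2%N.
  by case/setDP => _; apply: nim_value_move_top.
have final_nS g : g \in G :\: T -> <<g |: T>> == G -> nearly_gen S.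
  by case/setDP => Gg _; apply: nearly_gen_of_move.
rewrite {1}/nim_value (negbTE ntT) (negbTE nt1).
have [oT | eT] := boolP (odd #|T|); last first.
  apply/esym/mex_imageE => [g Mg | k lt_k].
    rewrite moveE // (negbTE eT).
    by case: ifP => [/(final_nS g Mg) -> | _] //; case: nearly_gen.
  have nS : nearly_gen S by case: nearly_gen lt_k.
  move: lt_k; rewrite nS ltnS leqn0 => /eqP ->.
  have [g Mg fin] := exists_final_move sTG ntT nt1 nS.
  by exists g; rewrite ?moveE ?fin.
have [g0 Mg0 /andP [Sg0 /eqP quiet]] := exists_quiet_move sTG nt1 oT.
have value_g0 : nim_value (g0 |: T) = nearly_gen S.
  rewrite moveE // quiet (negbTE ntT) oT.
  by have -> : g0.2 |: S = S by apply/setUidPr; rewrite sub1set.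
apply/esym/mex_imageE => [g Mg | ].
  by rewrite moveE // oT; case: ifP => // _; case: nearly_gen.
have [nS | nnS] := boolP (nearly_gen S).
  have [g1 Mg1 fin] := exists_final_move sTG ntT nt1 nS.
  move=> [|[|//]] _; [exists g1 | exists g0] => //; first by rewrite moveE // fin.
  by rewrite value_g0 nS.
have aS : a \notin S by apply: contra nnS; apply: nearly_gen_a; apply: snd_game_sub.
have Ma : (1, a) \in G :\: T.
  by apply: mem_moves; rewrite ?aS ?orbT ?a_in_H.
move=> [|[|//]] _; [exists g0 | exists (1, a)] => //.
  by rewrite value_g0 (negbTE nnS).
have nfin : ~~ (<<(1, a) |: T>> == G) by apply: contra nnS; apply: final_nS.
rewrite moveE // (negbTE nfin) oT /= nearly_gen_a // ?setU11 //.
by rewrite subUset sub1set a_in_H snd_game_sub.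
Qed.

Lemma card_snd_bottom T : fst @: T \subset [set 1] -> #|snd @: T| = #|T|.
Proof.
move=> sT1; apply: card_in_imset => -[z h] [z' h'] Tzh Tzh' /= eqh.
move: (subsetP sT1 _ (imset_f fst Tzh)) (subsetP sT1 _ (imset_f fst Tzh')).
by rewrite !inE /= => /eqP-> /eqP->; rewrite eqh.
Qed.

Lemma exists_fresh_a T : T \subset G -> fst @: T \subset [set 1] -> ~~ odd #|T| ->
  exists2 h, (h \in H) && (h \notin snd @: T) & a \in h |: snd @: T.
Proof.
move=> sTG sT1 eT; set S := snd @: T.
have [aS | aS] := boolP (a \in S); last by exists a; rewrite ?a_in_H ?aS ?setU11.
have : S \proper H.
  rewrite properEneq snd_game_sub // andbT; apply: contraTneq eT => eqSH.
  by rewrite -card_snd_bottom // -/S eqSH oddH.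
by case/properP => _ [h Hh Sh]; exists h; rewrite ?Hh ?Sh // setU1r.
Qed.

Lemma nim_value_rec_bottom T : T \subset G -> fst @: T \subset [set 1] ->
  nim_value T = mex [seq nim_value (g |: T) | g <- enum (G :\: T)].
Proof.
move=> sTG sT1; set S := snd @: T.
have moveE := nim_value_move_bottom sTG sT1.
have ntT : ~~ (<<T>> == G) by apply: (@not_gen_fst_cycle _ 1); rewrite // cycle1.
rewrite {1}/nim_value (negbTE ntT) sT1.
have [z _ z1] : exists2 z, z \in V & z != 1.
  by apply/trivgPn; rewrite trivg_card1 card_klein.
have Mz h : h \in H -> (z, h) \in G :\: T.
  move=> Hh; apply: mem_moves => //; apply/orP; left.
  by apply: contra z1 => /(subsetP sT1); rewrite inE.
have [oT | eT] := boolP (odd #|T|); last first.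
  apply/esym/mex_imageE => [g Mg | [|//] _].
    by rewrite moveE // (negbTE eT); case: (_ == 1) => //; case: ifP.
  have [h /andP [Hh Sh] aSh] := exists_fresh_a sTG sT1 eT.
  have Mh : (1, h) \in G :\: T by apply: mem_moves; rewrite ?Sh ?orbT.
  exists (1, h); rewrite // moveE //= (negbTE eT).
  suff -> : [forall x in H, nearly_gen (x |: (h |: S))] by [].
  apply/forall_inP => x Hx; apply: nearly_gen_a; last by rewrite setU1r.
  by rewrite !subUset !sub1set Hx Hh snd_game_sub.
have [allS | nallS] := boolP [forall h in H, nearly_gen (h |: S)].
  apply/esym/mex_imageE => // -[z' h'] Mg; rewrite moveE // oT.
  case: (_ == 1) => //=; rewrite (forall_inP allS) //.
  by case/setDP: Mg => /setXP [].
apply/esym/mex_imageE => [g Mg | ].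
  by rewrite moveE // oT; case: (_ == 1) => //; case: nearly_gen.
have [h Hh nSh] : exists2 h, h \in H & ~~ nearly_gen (h |: S).
  by apply/exists_inP; rewrite -negb_forall_in.
move=> [|[|//]] _; [exists (z, h) | exists (z, a)]; rewrite ?Mz ?a_in_H //.
  by rewrite moveE ?Mz //= (negbTE z1) oT (negbTE nSh).
rewrite moveE ?Mz ?a_in_H //= (negbTE z1) oT nearly_gen_a // ?setU11 //.
by rewrite subUset sub1set a_in_H snd_game_sub.
Qed.

Lemma nim_value_rec T : T \subset G ->
  nim_value T = if <<T>> == G then 0%N
                else mex [seq nim_value (g |: T) | g <- enum (G :\: T)].
Proof.
move=> sTG; case: ifP => [genT | /negbT ntT]; first by rewrite /nim_value genT.
have [sT1 | nt1] := boolP (fst @: T \subset [set 1]).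
  exact: nim_value_rec_bottom.
exact: nim_value_rec_top.
Qed.

End GenGame.

Local Close Scope group_scope.

Theorem mainTheorem10 (hT : finGroupType) (H : {group hT})
  (Hodd : odd #|H|) (dH : gen_rank H = 2)
  (P : {set ('Z_2 * 'Z_2 * hT)%type}) :
  let G := setX [set: 'Z_2 * 'Z_2] H in
  P \subset setX [set 1%g] H ->
  ~~ odd #|P| ->
  nim G P = 1.
Proof.
move=> G sP1H eP.
have [A [_ cardA genA]] := gen_rank_spec H.
have [a [b [_ defA]]] : exists a b, a != b /\ A = [set a; b].
  by apply/cards2P; rewrite cardA dH.
rewrite defA in genA.
have sPG : P \subset G by rewrite (subset_trans sP1H) // setXS ?subsetT.
have sP1 : fst @: P \subset [set 1%g].
  by apply/subsetP => _ /imsetP [[z h] /(subsetP sP1H) /setXP [z1 _] ->].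
rewrite (nim_eq (nim_value_rec Hodd genA)) // /nim_value sP1 (negbTE eP).
by rewrite (negbTE (not_gen_fst_cycle Hodd (z := 1%g) sPG _)) // cycle1.
Qed.
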